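(* Let $N,\mu,\beta,\sigma,\gamma,p>0$ and $0<\rho<1$ and consider the system $$S'=\mu N-\tfrac{\beta(1-\rho)}{N}SI-\tfrac{p}{N}S-\mu S,\qquad E'=\tfrac{\beta(1-\rho)}{N}SI-(\sigma+\mu)E,\qquad I'=\sigma E-(\gamma+\mu)I$$ on $\Omega=\{(S,E,I)\in\mathbb{R}_+^3: S+E+I\le N\}$. Then any $\omega$-limit set contained in the interior of $\Omega$ is either a closed orbit or the endemic equilibrium $(S^e,E^e,I^e)$, where $$S^e=\frac{(\sigma+\mu)(\gamma+\mu)N}{\sigma\beta(1-\rho)},\quad I^e=\frac{\mu N\sigma\beta(1-\rho)-(\sigma+\mu)(\gamma+\mu)(p+\mu N)}{(\sigma+\mu)(\gamma+\mu)\beta(1-\rho)},\quad E^e=\frac{\gamma+\mu}{\sigma}I^e.$$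
   Context: The $\omega$-limit set of a solution $x(\cdot)$ is $\{y:\exists t_n\to+\infty,\ x(t_n)\to y\}$. The endemic equilibrium lies in the interior of $\Omega$ exactly when $\mathcal{R}_0=\frac{\mu N\sigma\beta(1-\rho)}{(\sigma+\mu)(\gamma+\mu)(p+\mu N)}>1$. *)

From Stdlib Require Import Reals.
From Coquelicot Require Import Coquelicot.
Open Scope R_scope.

Definition fS (N mu beta rho p : R) (S E I : R) : R :=
  mu * N - beta * (1 - rho) / N * S * I - p / N * S - mu * S.
Definition fE (N mu beta rho sigma : R) (S E I : R) : R :=
  beta * (1 - rho) / N * S * I - (sigma + mu) * E.
Definition fI (mu sigma gamma : R) (S E I : R) : R :=
  sigma * E - (gamma + mu) * I.

Definition inOmega (N : R) (x : R * R * R) : Prop :=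
  let '(s, e, i) := x in 0 <= s /\ 0 <= e /\ 0 <= i /\ s + e + i <= N.

Definition inIntOmega (N : R) (x : R * R * R) : Prop :=
  let '(s, e, i) := x in 0 < s /\ 0 < e /\ 0 < i /\ s + e + i < N.

Definition solves_at (N mu beta sigma gamma rho p : R) (x : R -> R * R * R) (t : R) : Prop :=
  let S := fun s => fst (fst (x s)) in
  let E := fun s => snd (fst (x s)) in
  let I := fun s => snd (x s) in
  is_derive S t (fS N mu beta rho p (S t) (E t) (I t)) /\
  is_derive E t (fE N mu beta rho sigma (S t) (E t) (I t)) /\
  is_derive I t (fI mu sigma gamma (S t) (E t) (I t)).

Definition omega_limit (x : R -> R * R * R) (y : R * R * R) : Prop :=
  exists tn : nat -> R,
    is_lim_seq tn p_infty /\
    is_lim_seq (fun n => fst (fst (x (tn n)))) (fst (fst y)) /\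
    is_lim_seq (fun n => snd (fst (x (tn n)))) (snd (fst y)) /\
    is_lim_seq (fun n => snd (x (tn n))) (snd y).

Definition closed_orbit (N mu beta sigma gamma rho p : R) (A : R * R * R -> Prop) : Prop :=
  exists (y : R -> R * R * R) (T : R),
    (forall t, solves_at N mu beta sigma gamma rho p y t) /\
    0 < T /\ (forall t, y (t + T) = y t) /\
    (exists t1 t2, y t1 <> y t2) /\
    (forall z, A z <-> exists t, y t = z).

Definition Se (N mu beta sigma gamma rho : R) : R :=
  (sigma + mu) * (gamma + mu) * N / (sigma * beta * (1 - rho)).
Definition Ie (N mu beta sigma gamma rho p : R) : R :=
  (mu * N * sigma * beta * (1 - rho) - (sigma + mu) * (gamma + mu) * (p + mu * N))
  / ((sigma + mu) * (gamma + mu) * beta * (1 - rho)).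
Definition Ee (N mu beta sigma gamma rho p : R) : R :=
  (gamma + mu) / sigma * Ie N mu beta sigma gamma rho p.

From Stdlib Require Import Reals Lra Psatz Lia Classical ClassicalEpsilon.
From Coquelicot Require Import Coquelicot.
Open Scope R_scope.

(* The second alternative always holds: the endemic equilibrium attracts the trajectory.
   The flow preserves the nonnegative orthant and [S + E + I <= N]. Since every omega-limit
   point is interior, the trajectory eventually stays at distance [d > 0] from the coordinate
   planes; otherwise a subsequence would converge to an omega-limit point on the boundary.
   This excludes [R0 <= 1]: then [I >= d] eventually pushes [S] below [Se], and
   [E + (sigma + mu) / sigma * I], whose derivative is [beta (1 - rho) / N * I (S - Se)],
   decreases at a fixed rate. For [R0 > 1] the Volterra function [V], the sum of
   [x - xe - xe ln (x / xe)] over the coordinates [x] with equilibrium values [xe] (weighted by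
   [(sigma + mu) / sigma] for [I]), satisfies [V' <= - (p / N + mu) / N * (S - Se)^2] by AM-GM.
   So [V] converges and a Barbalat-type argument gives [S -> Se]; then [S' -> 0] gives
   [I -> Ie], and [I' -> 0] gives [E -> Ee]. *)

(* [auto_derive] leaves [Derive g t] for the unknown functions; this replaces it by the value
   given by a hypothesis [is_derive g t v]. *)
Ltac replace_Derive H :=
  match type of H with is_derive _ ?t ?v =>
    match goal with |- context [Derive ?g t] =>
      replace (Derive g t) with v by (symmetry; apply is_derive_unique; exact H)
    end
  end.

(** * Calculus on half-lines *)

Lemma continuity_pt_is_derive (f : R -> R) x l : is_derive f x l -> continuity_pt f x.
Proof.
  intros H. apply continuity_pt_filterlim, (ex_derive_continuous f x). now exists l.
Qed.

Lemma MVT_is_derive (f df : R -> R) a b : a <= b ->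
  (forall x, a <= x <= b -> is_derive f x (df x)) ->
  exists c, a <= c <= b /\ f b - f a = df c * (b - a).
Proof.
  intros Hab Hf.
  destruct (MVT_gen f a b df) as [c [Hc Hfc]];
    rewrite ?Rmin_left, ?Rmax_right in * by lra.
  - intros x Hx. apply Hf. lra.
  - intros x Hx. apply (continuity_pt_is_derive f x (df x)), Hf, Hx.
  - now exists c.
Qed.

Lemma nonincreasing_of_deriv_nonpos (f df : R -> R) T :
  (forall t, T <= t -> is_derive f t (df t)) -> (forall t, T <= t -> df t <= 0) ->
  forall t u, T <= t <= u -> f u <= f t.
Proof.
  intros Hf Hdf t u Htu.
  destruct (MVT_is_derive f df t u) as [c [Hc Hfc]]; [lra | intros x Hx; apply Hf; lra |].
  assert (df c <= 0) by (apply Hdf; lra). nra.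
Qed.

Lemma lipschitz_of_deriv_bound (f df : R -> R) T B :
  (forall t, T <= t -> is_derive f t (df t)) -> (forall t, T <= t -> Rabs (df t) <= B) ->
  forall t u, T <= t -> T <= u -> Rabs (f t - f u) <= B * Rabs (t - u).
Proof.
  intros Hf Hdf.
  assert (Hle : forall t u, T <= u <= t -> Rabs (f t - f u) <= B * Rabs (t - u)).
  { intros t u Htu.
    destruct (MVT_is_derive f df u t) as [c [Hc ->]]; [lra | intros x Hx; apply Hf; lra |].
    rewrite Rabs_mult. apply Rmult_le_compat_r; [apply Rabs_pos | apply Hdf; lra]. }
  intros t u Ht Hu. destruct (Rle_or_lt u t).
  - apply Hle. lra.
  - rewrite (Rabs_minus_sym (f t)), (Rabs_minus_sym t). apply Hle. lra.
Qed.

Lemma deriv_nonpos_at_right_min (f : R -> R) a m l : a < m -> is_derive f m l ->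
  (forall s, a <= s <= m -> f m <= f s) -> l <= 0.
Proof.
  intros Ham Hf Hmin. apply is_derive_Reals in Hf.
  destruct (Rle_or_lt l 0) as [Hl | Hl]; [exact Hl | exfalso].
  destruct (Hf (l / 2)) as [[del Hdel] Hquot]; [lra |]. simpl in Hquot.
  set (h := - Rmin (del / 2) (m - a)).
  assert (Hh : - (del / 2) <= h < 0 /\ - (m - a) <= h).
  { unfold h. pose proof (Rmin_l (del / 2) (m - a)). pose proof (Rmin_r (del / 2) (m - a)).
    assert (0 < Rmin (del / 2) (m - a)) by (apply Rmin_pos; lra). lra. }
  specialize (Hquot h ltac:(lra)).
  rewrite Rabs_left in Hquot by lra. specialize (Hquot ltac:(lra)).
  apply Rabs_lt_between in Hquot.
  assert (f m <= f (m + h)) by (apply Hmin; lra).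
  assert ((f (m + h) - f m) / h <= 0).
  { unfold Rdiv. assert (/ h < 0) by (apply Rinv_lt_0_compat; lra). nra. }
  lra.
Qed.

Lemma bounded_on_interval (f : R -> R) a b : a <= b ->
  (forall c, a <= c <= b -> continuity_pt f c) ->
  exists K, 0 <= K /\ forall c, a <= c <= b -> Rabs (f c) <= K.
Proof.
  intros Hab Hf.
  destruct (continuity_ab_maj (fun s => Rabs (f s)) a b Hab) as [m [Hm _]].
  - intros c Hc. apply (continuity_pt_comp f Rabs c); [now apply Hf | apply Rcontinuity_abs].
  - exists (Rabs (f m)). split; [apply Rabs_pos | exact Hm].
Qed.

Lemma is_lim_p_infty_intro (f : R -> R) (l : R) :
  (forall eps, 0 < eps -> exists T, forall t, T <= t -> Rabs (f t - l) < eps) ->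
  is_lim f p_infty l.
Proof.
  intros Hf. apply is_lim_spec. intros eps.
  destruct (Hf eps (cond_pos eps)) as [T HT]. exists T. intros t Ht. apply HT. lra.
Qed.

Lemma is_lim_p_infty_elim (f : R -> R) (l : R) : is_lim f p_infty l ->
  forall eps, 0 < eps -> exists T, forall t, T <= t -> Rabs (f t - l) < eps.
Proof.
  intros Hf eps Heps.
  destruct (proj2 (is_lim_spec f p_infty l) Hf (mkposreal eps Heps)) as [T HT].
  exists (T + 1). intros t Ht. apply HT. lra.
Qed.

Lemma is_lim_p_infty_ext (f g : R -> R) T (l : Rbar) : (forall t, T <= t -> f t = g t) ->
  is_lim f p_infty l -> is_lim g p_infty l.
Proof. intros Hfg. apply is_lim_ext_loc. exists T. intros t Ht. apply Hfg. lra. Qed.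

Lemma nonincreasing_bounded_is_lim (f : R -> R) T lo :
  (forall t u, T <= t <= u -> f u <= f t) -> (forall t, T <= t -> lo <= f t) ->
  exists l : R, is_lim f p_infty l.
Proof.
  intros Hmono Hlo.
  set (A := fun y => exists t, T <= t /\ y = - f t).
  destruct (completeness A) as [l [Hub Hlub]].
  - exists (- lo). intros y [t [Ht ->]]. specialize (Hlo t Ht). lra.
  - exists (- f T), T. split; [lra | reflexivity].
  - exists (- l). apply is_lim_p_infty_intro. intros eps Heps.
    destruct (classic (exists t, T <= t /\ l - eps < - f t)) as [[t0 [Ht0 Hft0]] | Hno].
    + exists t0. intros t Ht.
      assert (- f t <= l) by (apply Hub; exists t; split; [lra | reflexivity]).
      assert (f t <= f t0) by (apply Hmono; lra).
      apply Rabs_lt_between. lra.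
    + assert (l <= l - eps); [| lra].
      apply Hlub. intros y [t [Ht ->]].
      apply Rnot_lt_le. intros Hlt. apply Hno. now exists t.
Qed.

(* If [q t >= eps], then [q >= eps / 2] on [[t, t + h]] by the Lipschitz bound, so [f] drops by
   at least [eps h / 2] there, which convergence of [f] forbids for large [t]. *)
Lemma eventually_lt_of_deriv_le_opp (f df q dq : R -> R) T B (l : R) :
  (forall t, T <= t -> is_derive f t (df t)) ->
  (forall t, T <= t -> is_derive q t (dq t)) ->
  (forall t, T <= t -> Rabs (dq t) <= B) ->
  (forall t, T <= t -> df t <= - q t) ->
  is_lim f p_infty l ->
  forall eps, 0 < eps -> exists T', forall t, T' <= t -> q t < eps.
Proof.
  intros Hf Hq HB Hdf Hlim eps Heps.
  assert (HB0 : 0 <= B) by (pose proof (HB T (Rle_refl T)); pose proof (Rabs_pos (dq T)); lra).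
  pose proof (lipschitz_of_deriv_bound q dq T B Hq HB) as Hlip.
  set (h := eps / (2 * (B + 1))).
  assert (Hh : 0 < h) by (unfold h; apply Rdiv_lt_0_compat; lra).
  assert (HBh : B * h <= eps / 2).
  { unfold h. apply (Rmult_le_reg_r (2 * (B + 1))); [lra |]. field_simplify; [nra | lra]. }
  destruct (is_lim_p_infty_elim f l Hlim (eps * h / 4)) as [T1 HT1]; [nra |].
  exists (Rmax T T1). intros t Ht.
  pose proof (Rmax_l T T1). pose proof (Rmax_r T T1).
  destruct (Rlt_or_le (q t) eps) as [Hlt | Hge]; [exact Hlt | exfalso].
  destruct (MVT_is_derive f df t (t + h)) as [c [Hc Hfc]]; [lra | intros y Hy; apply Hf; lra |].
  assert (Hqc : eps / 2 <= q c).
  { specialize (Hlip c t ltac:(lra) ltac:(lra)).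
    rewrite (Rabs_pos_eq (c - t)) in Hlip by lra. apply Rabs_le_between in Hlip.
    assert (B * (c - t) <= B * h) by (apply Rmult_le_compat_l; lra). lra. }
  pose proof (Hdf c ltac:(lra)).
  pose proof (HT1 t ltac:(lra)) as Ht1. pose proof (HT1 (t + h) ltac:(lra)) as Ht2.
  apply Rabs_lt_between in Ht1. apply Rabs_lt_between in Ht2.
  replace (t + h - t) with h in Hfc by ring. nra.
Qed.

Lemma Barbalat (f df ddf : R -> R) T B (l : R) :
  (forall t, T <= t -> is_derive f t (df t)) ->
  (forall t, T <= t -> is_derive df t (ddf t)) ->
  (forall t, T <= t -> Rabs (ddf t) <= B) ->
  is_lim f p_infty l -> is_lim df p_infty 0.
Proof.
  intros Hf Hdf HB Hlim. apply is_lim_p_infty_intro. intros eps Heps.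
  destruct (eventually_lt_of_deriv_le_opp f df (fun t => - df t) (fun t => - ddf t) T B l)
    with (eps := eps) as [T1 HT1]; auto.
  { intros t Ht. apply (is_derive_opp df t (ddf t)), Hdf, Ht. }
  { intros t Ht. rewrite Rabs_Ropp. auto. }
  { intros t Ht. lra. }
  destruct (eventually_lt_of_deriv_le_opp (fun t => - f t) (fun t => - df t) df ddf T B (- l))
    with (eps := eps) as [T2 HT2]; auto.
  { intros t Ht. apply (is_derive_opp f t (df t)), Hf, Ht. }
  { intros t Ht. lra. }
  { apply (is_lim_opp f p_infty l Hlim). }
  exists (Rmax T1 T2). intros t Ht. pose proof (Rmax_l T1 T2). pose proof (Rmax_r T1 T2).
  specialize (HT1 t ltac:(lra)). specialize (HT2 t ltac:(lra)).
  rewrite Rminus_0_r. apply Rabs_def1; lra.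
Qed.

(* [(f - c / K) e^{K t}] is nonincreasing and [e^{K (t - T)} >= 1 + K (t - T)]. *)
Lemma eventually_le_of_deriv_le_affine (f df : R -> R) T c K :
  0 < K -> (forall t, T <= t -> is_derive f t (df t)) ->
  (forall t, T <= t -> df t <= c - K * f t) ->
  forall eta, 0 < eta -> exists T', forall t, T' <= t -> f t <= c / K + eta.
Proof.
  intros HK Hf Hdf eta Heta.
  set (g := fun s => (f s - c / K) * exp (K * s)).
  assert (Hg : forall t, T <= t -> g t <= g T).
  { intros t Ht.
    apply (nonincreasing_of_deriv_nonpos g (fun s => (df s - c + K * f s) * exp (K * s)) T);
      [| | lra].
    - intros s Hs. unfold g. auto_derive.
      + exists (df s). now apply Hf.
      + replace_Derive (Hf s Hs). field. lra.
    - intros s Hs. pose proof (Hdf s Hs). pose proof (exp_pos (K * s)). nra. }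
  set (A := Rabs (f T - c / K)).
  assert (HA : 0 <= A) by apply Rabs_pos.
  exists (T + A / (K * eta)). intros t Ht.
  assert (HtT : A <= K * (t - T) * eta).
  { replace A with (K * (A / (K * eta)) * eta) by (field; lra).
    apply Rmult_le_compat_r; [lra |]. apply Rmult_le_compat_l; lra. }
  assert (Hgrow : 1 + K * (t - T) <= exp (K * (t - T))) by apply exp_ineq1_le.
  assert (Hpos : 0 <= K * (t - T)) by nra.
  specialize (Hg t ltac:(nra)). unfold g in Hg.
  replace (K * t) with (K * T + K * (t - T)) in Hg by ring. rewrite exp_plus in Hg.
  pose proof (exp_pos (K * T)). pose proof (Rle_abs (f T - c / K)) as HfT. fold A in HfT.
  assert (Hdec : (f t - c / K) * exp (K * (t - T)) <= A).
  { apply (Rmult_le_reg_l (exp (K * T))); [lra |].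
    assert (exp (K * T) * (f T - c / K) <= exp (K * T) * A) by (apply Rmult_le_compat_l; lra).
    replace (exp (K * T) * ((f t - c / K) * exp (K * (t - T))))
      with ((f t - c / K) * (exp (K * T) * exp (K * (t - T)))) by ring.
    lra. }
  destruct (Rle_or_lt (f t - c / K) eta) as [Hle | Hgt]; [lra | exfalso].
  assert (eta * exp (K * (t - T)) < (f t - c / K) * exp (K * (t - T)))
    by (apply Rmult_lt_compat_r; [apply exp_pos | lra]).
  assert (eta * (1 + K * (t - T)) <= eta * exp (K * (t - T))) by (apply Rmult_le_compat_l; lra).
  lra.
Qed.

Lemma deriv_le_neg_unbounded_below (f df : R -> R) T r lo : 0 < r ->
  (forall t, T <= t -> is_derive f t (df t)) -> (forall t, T <= t -> df t <= - r) ->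
  exists t, T <= t /\ f t < lo.
Proof.
  intros Hr Hf Hdf.
  set (M := Rabs (f T - lo) / r + 1).
  assert (HrM : r * M = Rabs (f T - lo) + r) by (unfold M; field; lra).
  assert (HM : 0 < M) by (pose proof (Rabs_pos (f T - lo)); nra).
  exists (T + M). split; [lra |].
  destruct (MVT_is_derive f df T (T + M)) as [c [Hc Hfc]]; [lra | intros y Hy; apply Hf; lra |].
  specialize (Hdf c ltac:(lra)).
  pose proof (Rle_abs (f T - lo)). replace (T + M - T) with M in Hfc by ring. nra.
Qed.

(** * Omega-limit points *)

Lemma is_lim_seq_inv_succ : is_lim_seq (fun n => / INR (S n)) 0.
Proof.
  apply (is_lim_seq_inv (fun n => INR (S n)) p_infty); [| discriminate].
  apply (is_lim_seq_incr_1 INR p_infty), is_lim_seq_INR.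
Qed.

Lemma filterlim_ge_id (phi : nat -> nat) : (forall n, (n <= phi n)%nat) ->
  filterlim phi eventually eventually.
Proof. intros Hphi P [N HN]. exists N. intros n Hn. apply HN. specialize (Hphi n). lia. Qed.

Lemma bounded_seq_ex_cv_subseq (u : nat -> R) M : (forall n, Rabs (u n) <= M) ->
  exists (phi : nat -> nat) (l : R),
    filterlim phi eventually eventually /\ is_lim_seq (fun n => u (phi n)) l.
Proof.
  intros Hu.
  destruct (Bolzano_Weierstrass u (fun c => - M <= c <= M) (compact_P3 (- M) M)) as [l Hl].
  { intros n. apply Rabs_le_between, Hu. }
  assert (Hclose : forall k, exists q, (k <= q)%nat /\ Rabs (u q - l) < / INR (S k)).
  { intros k. apply (Hl (fun y => Rabs (y - l) < / INR (S k))).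
    exists (mkposreal _ (Rinv_0_lt_compat _ (lt_0_INR _ (Nat.lt_0_succ k)))).
    intros y Hy. exact Hy. }
  destruct (choice _ Hclose) as [phi Hphi].
  exists phi, l. split; [apply filterlim_ge_id; intros n; apply Hphi |].
  apply (is_lim_seq_le_le (fun n => l - / INR (S n)) _ (fun n => l + / INR (S n))).
  - intros n. pose proof (proj2 (Hphi n)) as Hn. apply Rabs_lt_between in Hn. lra.
  - replace (Finite l) with (Finite (l - 0)) by (f_equal; ring).
    apply is_lim_seq_minus'; [apply is_lim_seq_const | apply is_lim_seq_inv_succ].
  - replace (Finite l) with (Finite (l + 0)) by (f_equal; ring).
    apply is_lim_seq_plus'; [apply is_lim_seq_const | apply is_lim_seq_inv_succ].
Qed.

Lemma bounded_seq3_ex_cv_subseq (u v w : nat -> R) M :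
  (forall n, Rabs (u n) <= M /\ Rabs (v n) <= M /\ Rabs (w n) <= M) ->
  exists (phi : nat -> nat) (a b c : R), filterlim phi eventually eventually /\
    is_lim_seq (fun n => u (phi n)) a /\ is_lim_seq (fun n => v (phi n)) b /\
    is_lim_seq (fun n => w (phi n)) c.
Proof.
  intros Hb.
  destruct (bounded_seq_ex_cv_subseq u M) as [phi1 [a [Hphi1 Ha]]]; [apply Hb |].
  destruct (bounded_seq_ex_cv_subseq (fun n => v (phi1 n)) M) as [phi2 [b [Hphi2 Hb2]]];
    [intros n; apply Hb |].
  destruct (bounded_seq_ex_cv_subseq (fun n => w (phi1 (phi2 n))) M) as [phi3 [c [Hphi3 Hc]]];
    [intros n; apply Hb |].
  exists (fun n => phi1 (phi2 (phi3 n))), a, b, c.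
  split; [| split; [| split]].
  - apply (filterlim_comp _ _ _ phi3 (fun n => phi1 (phi2 n)) _ eventually); [exact Hphi3 |].
    now apply (filterlim_comp _ _ _ phi2 phi1 _ eventually).
  - apply (is_lim_seq_subseq (fun n => u (phi1 (phi2 n))) a phi3 Hphi3).
    apply (is_lim_seq_subseq (fun n => u (phi1 n)) a phi2 Hphi2 Ha).
  - apply (is_lim_seq_subseq (fun n => v (phi1 (phi2 n))) b phi3 Hphi3 Hb2).
  - exact Hc.
Qed.

Lemma omega_limit_of_is_lim (x : R -> R * R * R) (y0 : R * R * R) :
  is_lim (fun t => fst (fst (x t))) p_infty (fst (fst y0)) ->
  is_lim (fun t => snd (fst (x t))) p_infty (snd (fst y0)) ->
  is_lim (fun t => snd (x t)) p_infty (snd y0) ->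
  forall y, omega_limit x y <-> y = y0.
Proof.
  intros H1 H2 H3 y. split.
  - intros [tn [Htn [Hy1 [Hy2 Hy3]]]].
    assert (Hcomp : forall (f : R -> R) (l : R), is_lim f p_infty l ->
              is_lim_seq (fun n => f (tn n)) l).
    { intros f l Hf. apply (is_lim_comp_seq f tn p_infty l Hf); [| exact Htn].
      exists O. intros n _. discriminate. }
    apply is_lim_seq_unique in Hy1, Hy2, Hy3.
    rewrite (is_lim_seq_unique _ _ (Hcomp _ _ H1)) in Hy1.
    rewrite (is_lim_seq_unique _ _ (Hcomp _ _ H2)) in Hy2.
    rewrite (is_lim_seq_unique _ _ (Hcomp _ _ H3)) in Hy3.
    injection Hy1 as Hy1. injection Hy2 as Hy2. injection Hy3 as Hy3.
    destruct y as [[y1 y2] y3], y0 as [[z1 z2] z3]. simpl in *. congruence.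
  - intros ->. exists INR.
    assert (Hnat : eventually (fun n => Finite (INR n) <> p_infty))
      by (exists O; intros n _; discriminate).
    split; [apply is_lim_seq_INR | split; [| split]].
    + exact (is_lim_comp_seq (fun t => fst (fst (x t))) INR p_infty _ H1 Hnat is_lim_seq_INR).
    + exact (is_lim_comp_seq (fun t => snd (fst (x t))) INR p_infty _ H2 Hnat is_lim_seq_INR).
    + exact (is_lim_comp_seq (fun t => snd (x t)) INR p_infty _ H3 Hnat is_lim_seq_INR).
Qed.

Lemma omega_limit_prod_eq0 (x : R -> R * R * R) M (tn : nat -> R) :
  (forall n, Rabs (fst (fst (x (tn n)))) <= M /\ Rabs (snd (fst (x (tn n)))) <= M /\
             Rabs (snd (x (tn n))) <= M) ->
  is_lim_seq tn p_infty ->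
  is_lim_seq (fun n => fst (fst (x (tn n))) * snd (fst (x (tn n))) * snd (x (tn n))) 0 ->
  exists y, omega_limit x y /\ fst (fst y) * snd (fst y) * snd y = 0.
Proof.
  intros Hbound Htn Hprod.
  destruct (bounded_seq3_ex_cv_subseq _ _ _ M Hbound) as [phi [a [b [c [Hphi [Ha [Hb Hc]]]]]]].
  exists (a, b, c). split.
  - exists (fun n => tn (phi n)).
    split; [exact (is_lim_seq_subseq tn p_infty phi Hphi Htn) | auto].
  - assert (Habc : is_lim_seq (fun n => fst (fst (x (tn (phi n)))) * snd (fst (x (tn (phi n))))
                                        * snd (x (tn (phi n)))) (a * b * c))
      by (apply is_lim_seq_mult'; [apply is_lim_seq_mult' |]; assumption).
    apply is_lim_seq_unique in Habc.
    rewrite (is_lim_seq_unique _ _ (is_lim_seq_subseq _ _ phi Hphi Hprod)) in Habc.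
    injection Habc as Habc. simpl. congruence.
Qed.

Lemma mul3_le_of_factor_le s e i a M : 0 <= s <= M -> 0 <= e <= M -> 0 <= i <= M ->
  s <= a \/ e <= a \/ i <= a -> s * e * i <= M * M * a.
Proof.
  intros Hs He Hi Ha.
  destruct Ha as [Ha | [Ha | Ha]].
  - replace (s * e * i) with (s * (e * i)) by ring. replace (M * M * a) with (a * (M * M)) by ring.
    apply Rmult_le_compat; [lra | apply Rmult_le_pos; lra | lra | apply Rmult_le_compat; lra].
  - replace (s * e * i) with (e * (s * i)) by ring. replace (M * M * a) with (a * (M * M)) by ring.
    apply Rmult_le_compat; [lra | apply Rmult_le_pos; lra | lra | apply Rmult_le_compat; lra].
  - apply Rmult_le_compat; [apply Rmult_le_pos; lra | lra | apply Rmult_le_compat; lra | lra].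
Qed.

(* Otherwise there are times [tn >= n] at which some coordinate is below [1 / (n + 1)], so the
   product of the coordinates tends to [0] along [tn]. *)
Lemma omega_limit_persistence (x : R -> R * R * R) M :
  (forall t, 0 <= t ->
     0 <= fst (fst (x t)) <= M /\ 0 <= snd (fst (x t)) <= M /\ 0 <= snd (x t) <= M) ->
  (forall y, omega_limit x y -> 0 < fst (fst y) /\ 0 < snd (fst y) /\ 0 < snd y) ->
  exists d T, 0 < d /\ 0 <= T /\ forall t, T <= t ->
    d <= fst (fst (x t)) /\ d <= snd (fst (x t)) /\ d <= snd (x t).
Proof.
  intros Hbox Hpos. apply NNPP. intros Hno.
  assert (Hsmall : forall n, exists t, INR n <= t /\
            fst (fst (x t)) * snd (fst (x t)) * snd (x t) <= M * M * / INR (S n)).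
  { intros n. apply NNPP. intros Hn. apply Hno.
    exists (/ INR (S n)), (INR n).
    split; [apply Rinv_0_lt_compat, lt_0_INR; lia | split; [apply pos_INR |]].
    intros t Ht. apply NNPP. intros Hnot. apply Hn. exists t. split; [exact Ht |].
    pose proof (pos_INR n).
    destruct (Hbox t ltac:(lra)) as [HS [HE HI]].
    apply mul3_le_of_factor_le; [lra | lra | lra |].
    destruct (Rle_or_lt (fst (fst (x t))) (/ INR (S n))); [now left | right].
    destruct (Rle_or_lt (snd (fst (x t))) (/ INR (S n))); [now left | right].
    destruct (Rle_or_lt (snd (x t)) (/ INR (S n))); [easy |].
    exfalso. apply Hnot. lra. }
  destruct (choice _ Hsmall) as [tn Htn].
  assert (Htn0 : forall n, 0 <= tn n)
    by (intros n; pose proof (pos_INR n); pose proof (proj1 (Htn n)); lra).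
  destruct (omega_limit_prod_eq0 x M tn) as [y [Hy Hy0]].
  - intros n. destruct (Hbox (tn n) (Htn0 n)) as [? [? ?]].
    rewrite !Rabs_pos_eq by lra. lra.
  - apply (is_lim_seq_le_p_loc INR); [| apply is_lim_seq_INR].
    exists O. intros n _. apply Htn.
  - apply (is_lim_seq_le_le (fun _ => 0) _ (fun n => M * M * / INR (S n))).
    + intros n. split; [| apply Htn].
      destruct (Hbox (tn n) (Htn0 n)) as [? [? ?]].
      apply Rmult_le_pos; [apply Rmult_le_pos |]; lra.
    + apply is_lim_seq_const.
    + replace (Finite 0) with (Finite (M * M * 0)) by (f_equal; ring).
      apply is_lim_seq_mult'; [apply is_lim_seq_const | apply is_lim_seq_inv_succ].
  - destruct (Hpos y Hy) as [Ha [Hb Hc]].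
    assert (0 < fst (fst y) * snd (fst y) * snd y)
      by (apply Rmult_lt_0_compat; [apply Rmult_lt_0_compat |]; assumption).
    lra.
Qed.

(** * Forward invariance of the nonnegative orthant *)

Section OrthantInvariance.

Variables L t1 : R.

Lemma is_derive_exp_weight (U : R -> R) s dU : is_derive U s dU ->
  is_derive (fun r => U r * exp (- L * r)) s ((dU - L * U s) * exp (- L * s)).
Proof. intros HdU. auto_derive; [now exists dU |]. replace_Derive HdU. ring. Qed.

Lemma ex_weighted_min (U dU : R -> R) : 0 <= t1 ->
  (forall s, 0 <= s <= t1 -> is_derive U s (dU s)) ->
  exists m, 0 <= m <= t1 /\
    forall s, 0 <= s <= t1 -> U m * exp (- L * m) <= U s * exp (- L * s).
Proof.
  intros Ht1 HdU.
  destruct (continuity_ab_min (fun s => U s * exp (- L * s)) 0 t1 Ht1) as [m [Hmin Hm]].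
  - intros s Hs. eapply continuity_pt_is_derive, is_derive_exp_weight, HdU, Hs.
  - now exists m.
Qed.

(* At a minimum [m > 0] of [U e^{-L s}] on [[0, m]] one has [dU <= L U m]. *)
Lemma nonneg_at_weighted_min (U : R -> R) dU m : 0 <= m -> is_derive U m dU -> 0 <= U 0 ->
  (forall s, 0 <= s <= m -> U m * exp (- L * m) <= U s * exp (- L * s)) ->
  (0 < m -> U m < 0 -> L * U m < dU) -> 0 <= U m.
Proof.
  intros Hm HdU HU0 Hmin Hin.
  destruct (Rle_or_lt 0 (U m)) as [Hle | Hneg]; [exact Hle | exfalso].
  assert (Hmpos : 0 < m).
  { destruct Hm as [Hm | <-]; [exact Hm |].
    specialize (Hmin 0 ltac:(lra)). pose proof (exp_pos (- L * 0)). nra. }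
  assert (Hder : (dU - L * U m) * exp (- L * m) <= 0).
  { apply (deriv_nonpos_at_right_min (fun s => U s * exp (- L * s)) 0 m);
      [exact Hmpos | now apply is_derive_exp_weight | exact Hmin]. }
  specialize (Hin Hmpos Hneg). pose proof (exp_pos (- L * m)). nra.
Qed.

Lemma least_weighted_min_nonneg (U V W dU : R -> R) mU mV mW :
  (forall s, 0 <= s <= t1 -> is_derive U s (dU s)) -> 0 <= U 0 ->
  0 <= mU <= t1 ->
  (forall s, 0 <= s <= t1 -> U mU * exp (- L * mU) <= U s * exp (- L * s)) ->
  (forall s, 0 <= s <= t1 -> V mV * exp (- L * mV) <= V s * exp (- L * s)) ->
  (forall s, 0 <= s <= t1 -> W mW * exp (- L * mW) <= W s * exp (- L * s)) ->
  U mU * exp (- L * mU) <= V mV * exp (- L * mV) ->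
  U mU * exp (- L * mU) <= W mW * exp (- L * mW) ->
  (forall s, 0 < s <= t1 -> U s < 0 -> U s <= V s -> U s <= W s -> L * U s < dU s) ->
  0 <= U mU * exp (- L * mU).
Proof.
  intros HdU HU0 HmU HminU HminV HminW HUV HUW Hin.
  pose proof (exp_pos (- L * mU)) as Hw.
  assert (Hle : forall Q : R -> R, U mU * exp (- L * mU) <= Q mU * exp (- L * mU) -> U mU <= Q mU)
    by (intros Q HQ; apply (Rmult_le_reg_r (exp (- L * mU))); lra).
  apply Rmult_le_pos; [| lra].
  apply (nonneg_at_weighted_min U (dU mU) mU); [lra | apply HdU; lra | exact HU0 | |].
  - intros s Hs. apply HminU. lra.
  - intros HmU0 HUneg. apply Hin; [lra | exact HUneg | |]; apply Hle.
    + pose proof (HminV mU HmU). lra.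
    + pose proof (HminW mU HmU). lra.
Qed.

Variables X Y Z dX dY dZ : R -> R.
Hypothesis Hderiv : forall s, 0 <= s <= t1 ->
  is_derive X s (dX s) /\ is_derive Y s (dY s) /\ is_derive Z s (dZ s).

(* The coordinate whose weighted minimum is smallest is nonnegative there, hence all are. *)
Lemma orthant_forward_invariant : 0 <= t1 -> 0 <= X 0 -> 0 <= Y 0 -> 0 <= Z 0 ->
  (forall s, 0 < s <= t1 -> X s < 0 -> X s <= Y s -> X s <= Z s -> L * X s < dX s) ->
  (forall s, 0 < s <= t1 -> Y s < 0 -> Y s <= X s -> Y s <= Z s -> L * Y s < dY s) ->
  (forall s, 0 < s <= t1 -> Z s < 0 -> Z s <= X s -> Z s <= Y s -> L * Z s < dZ s) ->
  0 <= X t1 /\ 0 <= Y t1 /\ 0 <= Z t1.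
Proof.
  intros Ht1 HX0 HY0 HZ0 HinX HinY HinZ.
  assert (HdX : forall s, 0 <= s <= t1 -> is_derive X s (dX s)) by apply Hderiv.
  assert (HdY : forall s, 0 <= s <= t1 -> is_derive Y s (dY s)) by apply Hderiv.
  assert (HdZ : forall s, 0 <= s <= t1 -> is_derive Z s (dZ s)) by apply Hderiv.
  destruct (ex_weighted_min X dX Ht1 HdX) as [mX [HmX HminX]].
  destruct (ex_weighted_min Y dY Ht1 HdY) as [mY [HmY HminY]].
  destruct (ex_weighted_min Z dZ Ht1 HdZ) as [mZ [HmZ HminZ]].
  assert (Hall : 0 <= X mX * exp (- L * mX) /\ 0 <= Y mY * exp (- L * mY) /\
                 0 <= Z mZ * exp (- L * mZ)).
  { destruct (Rle_or_lt (X mX * exp (- L * mX)) (Y mY * exp (- L * mY)));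
    destruct (Rle_or_lt (X mX * exp (- L * mX)) (Z mZ * exp (- L * mZ)));
    destruct (Rle_or_lt (Y mY * exp (- L * mY)) (Z mZ * exp (- L * mZ))).
    all: first
      [ assert (0 <= X mX * exp (- L * mX))
          by (apply (least_weighted_min_nonneg X Y Z dX mX mY mZ); auto; lra)
      | assert (0 <= Y mY * exp (- L * mY))
          by (apply (least_weighted_min_nonneg Y X Z dY mY mX mZ); auto; lra)
      | assert (0 <= Z mZ * exp (- L * mZ))
          by (apply (least_weighted_min_nonneg Z X Y dZ mZ mX mY); auto; lra) ].
    all: lra. }
  pose proof (HminX t1 ltac:(lra)). pose proof (HminY t1 ltac:(lra)).
  pose proof (HminZ t1 ltac:(lra)). pose proof (exp_pos (- L * t1)).
  repeat split; apply (Rmult_le_reg_r (exp (- L * t1))); lra.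
Qed.

End OrthantInvariance.

(** * The Lyapunov inequality *)

Lemma two_le_add_of_mul_eq1 u v : 0 < u -> 0 < v -> u * v = 1 -> 2 <= u + v.
Proof.
  intros Hu Hv Huv. pose proof (Rle_0_sqr (u - v)). unfold Rsqr in *.
  assert (4 <= (u + v) * (u + v)) by nra. nra.
Qed.

(* For two of [x], [y], [z], say [x] and [y], [(x - 1) (y - 1) <= 0]; then
   [x + y + z >= 1 + x y + z >= 3]. *)
Lemma AM_GM3 x y z : 0 < x -> 0 < y -> 0 < z -> x * y * z = 1 -> 3 <= x + y + z.
Proof.
  intros Hx Hy Hz Hxyz.
  assert (2 <= x * y + z) by (apply two_le_add_of_mul_eq1; nra).
  assert (2 <= y * z + x) by (apply two_le_add_of_mul_eq1; nra).
  assert (2 <= x * z + y) by (apply two_le_add_of_mul_eq1; nra).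
  destruct (Rle_or_lt ((x - 1) * (y - 1)) 0); [nra |].
  destruct (Rle_or_lt ((y - 1) * (z - 1)) 0); [nra |].
  destruct (Rle_or_lt ((x - 1) * (z - 1)) 0); [nra |].
  nra.
Qed.

Definition volterra (c x : R) : R := x - c - c * ln (x / c).

Lemma volterra_nonneg c x : 0 < c -> 0 < x -> 0 <= volterra c x.
Proof.
  intros Hc Hx. pose proof (exp_ineq1_le (ln (x / c))) as Hln.
  rewrite exp_ln in Hln by (apply Rdiv_lt_0_compat; lra).
  apply (Rmult_le_compat_l c) in Hln; [| lra].
  replace (c * (x / c)) with x in Hln by (field; lra).
  unfold volterra. lra.
Qed.

(* With [x = se / s], [y = s i ee / (se ie e)] and [z = e ie / (ee i)], the left-hand side
   equals [- kS (s - se)^2 / s + a se ie (3 - x - y - z)], and [x y z = 1]. *)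
Lemma lyapunov_ineq a kS b c sigma Lam M se ee ie s e i :
  0 < a -> 0 < kS -> 0 < sigma -> 0 < se -> 0 < ee -> 0 < ie ->
  0 < s -> 0 < e -> 0 < i -> s <= M ->
  Lam = kS * se + a * se * ie -> b = a * se * ie / ee -> c = sigma * ee / ie ->
  (1 - se / s) * (Lam - a * s * i - kS * s) + (1 - ee / e) * (a * s * i - b * e)
    + b / sigma * ((1 - ie / i) * (sigma * e - c * i))
  <= - (kS / M * ((s - se) * (s - se))).
Proof.
  intros ha hk hsig hse hee hie hs he hi hsM -> -> ->.
  replace ((1 - se / s) * (kS * se + a * se * ie - a * s * i - kS * s)
           + (1 - ee / e) * (a * s * i - a * se * ie / ee * e)
           + a * se * ie / ee / sigma * ((1 - ie / i) * (sigma * e - sigma * ee / ie * i)))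
    with (- (kS * ((s - se) * (s - se)) / s)
          + a * se * ie * (3 - se / s - s * i * ee / (se * ie * e) - e * ie / (ee * i)))
    by (field; repeat split; lra).
  set (x := se / s). set (y := s * i * ee / (se * ie * e)). set (z := e * ie / (ee * i)).
  assert (Hxyz : 3 <= x + y + z).
  { apply AM_GM3; unfold x, y, z.
    - apply Rdiv_lt_0_compat; lra.
    - apply Rdiv_lt_0_compat; repeat apply Rmult_lt_0_compat; lra.
    - apply Rdiv_lt_0_compat; repeat apply Rmult_lt_0_compat; lra.
    - field. repeat split; lra. }
  assert (0 <= a * se * ie * (x + y + z - 3))
    by (apply Rmult_le_pos; [repeat apply Rmult_le_pos |]; lra).
  assert (kS * ((s - se) * (s - se)) / M <= kS * ((s - se) * (s - se)) / s).
  { apply Rmult_le_compat_l; [apply Rmult_le_pos; [lra | apply Rle_0_sqr] |].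
    apply Rinv_le_contravar; lra. }
  unfold Rdiv in *. lra.
Qed.

(** * The SEIR system *)

Lemma Rabs_plus_le_of u v U V : Rabs u <= U -> Rabs v <= V -> Rabs (u + v) <= U + V.
Proof. intros. eapply Rle_trans; [apply Rabs_triang | lra]. Qed.

Lemma Rabs_minus_le_of u v U V : Rabs u <= U -> Rabs v <= V -> Rabs (u - v) <= U + V.
Proof. intros. eapply Rle_trans; [apply Rabs_triang | rewrite Rabs_Ropp; lra]. Qed.

Lemma Rabs_mult_le_of u v U V : Rabs u <= U -> Rabs v <= V -> Rabs (u * v) <= U * V.
Proof. intros. rewrite Rabs_mult. apply Rmult_le_compat; auto using Rabs_pos. Qed.

Lemma Rabs_opp_le_of u U : Rabs u <= U -> Rabs (- u) <= U.
Proof. now rewrite Rabs_Ropp. Qed.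

(* Solves [Rabs e <= ?B] for a polynomial expression [e], by recursion on [e]: leaves are
   bounded by a hypothesis or by their own absolute value. *)
Ltac bound_abs :=
  first
    [ eassumption
    | eapply Rabs_plus_le_of; [bound_abs | bound_abs]
    | eapply Rabs_minus_le_of; [bound_abs | bound_abs]
    | eapply Rabs_mult_le_of; [bound_abs | bound_abs]
    | eapply Rabs_opp_le_of; bound_abs
    | apply Rle_refl ].

Lemma mul_ge_of_ge_opp_bound s i K th : 0 < th -> - th <= s -> - th <= i ->
  Rabs s <= K -> Rabs i <= K -> - (K * th) <= s * i.
Proof.
  intros Hth Hs Hi HsK HiK. apply Rabs_le_between in HsK. apply Rabs_le_between in HiK.
  destruct (Rle_or_lt 0 s); destruct (Rle_or_lt 0 i); nra.
Qed.

Section SEIR.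

Variables N mu beta sigma gamma p rho : R.
Hypotheses (hN : 0 < N) (hmu : 0 < mu) (hbeta : 0 < beta) (hsigma : 0 < sigma)
  (hgamma : 0 < gamma) (hp : 0 < p) (hrho1 : rho < 1).

Local Notation a := (beta * (1 - rho) / N).
Local Notation kS := (p / N + mu).
Local Notation FS := (fS N mu beta rho p).
Local Notation FE := (fE N mu beta rho sigma).
Local Notation FI := (fI mu sigma gamma).
Local Notation Sst := (Se N mu beta sigma gamma rho).
Local Notation Est := (Ee N mu beta sigma gamma rho p).
Local Notation Ist := (Ie N mu beta sigma gamma rho p).

Lemma infection_rate_pos : 0 < a.
Proof. apply Rdiv_lt_0_compat; [apply Rmult_lt_0_compat |]; lra. Qed.

Lemma removal_rate_pos : 0 < kS.
Proof. assert (0 < p / N) by (apply Rdiv_lt_0_compat; lra). lra. Qed.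

Lemma fS_eq s e i : FS s e i = mu * N - a * s * i - kS * s.
Proof. unfold fS. ring. Qed.

Lemma endemic_balance : mu * N = kS * Sst + a * Sst * Ist.
Proof. unfold Se, Ie. field. repeat split; lra. Qed.

Lemma infection_rate_mul_Se : a * Sst = (sigma + mu) * (gamma + mu) / sigma.
Proof. unfold Se. field. repeat split; lra. Qed.

Lemma Se_pos : 0 < Sst.
Proof. unfold Se. apply Rdiv_lt_0_compat; repeat apply Rmult_lt_0_compat; lra. Qed.

Variables S E I : R -> R.
Hypothesis Hsol : forall t, 0 <= t ->
  is_derive S t (FS (S t) (E t) (I t)) /\ is_derive E t (FE (S t) (E t) (I t)) /\
  is_derive I t (FI (S t) (E t) (I t)).

Local Notation FSt t := (FS (S t) (E t) (I t)).
Local Notation FEt t := (FE (S t) (E t) (I t)).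
Local Notation FIt t := (FI (S t) (E t) (I t)).

(* The inward condition of [orthant_forward_invariant] holds with [L = a K + sigma + 1],
   where [K] bounds [|S|] and [|I|] on [[0, t1]]. *)
Lemma SEI_nonneg : 0 <= S 0 -> 0 <= E 0 -> 0 <= I 0 ->
  forall t, 0 <= t -> 0 <= S t /\ 0 <= E t /\ 0 <= I t.
Proof.
  intros HS0 HE0 HI0 t1 Ht1.
  assert (Hcont : forall (X : R -> R), (forall s, 0 <= s -> ex_derive X s) ->
            forall c, 0 <= c <= t1 -> continuity_pt X c).
  { intros X HX c Hc. destruct (HX c ltac:(lra)) as [l Hl].
    exact (continuity_pt_is_derive X c l Hl). }
  destruct (bounded_on_interval S 0 t1 Ht1) as [KS [HKS HSK]].
  { apply Hcont. intros s Hs. eexists. apply (Hsol s Hs). }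
  destruct (bounded_on_interval I 0 t1 Ht1) as [KI [HKI HIK]].
  { apply Hcont. intros s Hs. eexists. apply (Hsol s Hs). }
  set (K := Rmax KS KI).
  assert (HSK' : forall s, 0 <= s <= t1 -> Rabs (S s) <= K)
    by (intros s Hs; eapply Rle_trans; [apply HSK, Hs | apply Rmax_l]).
  assert (HIK' : forall s, 0 <= s <= t1 -> Rabs (I s) <= K)
    by (intros s Hs; eapply Rle_trans; [apply HIK, Hs | apply Rmax_r]).
  assert (HK : 0 <= K) by (eapply Rle_trans; [exact HKS | apply Rmax_l]).
  pose proof infection_rate_pos as ha. pose proof removal_rate_pos as hk.
  apply (orthant_forward_invariant (a * K + sigma + 1) t1 S E I
           (fun s => FSt s) (fun s => FEt s) (fun s => FIt s)); auto.
  - intros s Hs. apply Hsol. lra.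
  - intros s Hs HS HSE HSI. rewrite fS_eq.
    specialize (HIK' s ltac:(lra)). apply Rabs_le_between in HIK'.
    assert (0 <= - S s * (I s + K)) by (apply Rmult_le_pos; lra). nra.
  - intros s Hs HE HES HEI. unfold fE.
    pose proof (mul_ge_of_ge_opp_bound (S s) (I s) K (- E s) ltac:(lra) ltac:(lra) ltac:(lra)
                  (HSK' s ltac:(lra)) (HIK' s ltac:(lra))).
    assert (a * (- (K * - E s)) <= a * (S s * I s)) by (apply Rmult_le_compat_l; lra).
    nra.
  - intros s Hs HI HIS HIE. unfold fI.
    assert (0 <= a * K * - I s) by (apply Rmult_le_pos; [apply Rmult_le_pos |]; lra). nra.
Qed.

(* [(S + E + I - N)' = - mu (S + E + I - N) - (p / N) S - gamma I]. *)
Lemma SEI_total_le : S 0 + E 0 + I 0 <= N ->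
  (forall t, 0 <= t -> 0 <= S t /\ 0 <= E t /\ 0 <= I t) ->
  forall t, 0 <= t -> S t + E t + I t <= N.
Proof.
  intros H0 Hnn t Ht.
  set (g := fun s => (S s + E s + I s - N) * exp (mu * s)).
  assert (Hg : g t <= g 0).
  { apply (nonincreasing_of_deriv_nonpos g
             (fun s => - (p / N * S s + gamma * I s) * exp (mu * s)) 0); [| | lra].
    - intros s Hs. destruct (Hsol s Hs) as [DS [DE DI]]. unfold g. auto_derive.
      + repeat split; eexists; eassumption.
      + replace_Derive DS. replace_Derive DE. replace_Derive DI. unfold fS, fE, fI. field. lra.
    - intros s Hs. destruct (Hnn s Hs) as [HS [HE HI]].
      assert (0 <= p / N * S s) by (apply Rmult_le_pos; [apply Rlt_le, Rdiv_lt_0_compat |]; lra).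
      assert (0 <= (p / N * S s + gamma * I s) * exp (mu * s))
        by (apply Rmult_le_pos; [nra | apply Rlt_le, exp_pos]).
      lra. }
  unfold g in Hg. rewrite Rmult_0_r, exp_0, Rmult_1_r in Hg.
  pose proof (exp_pos (mu * t)). nra.
Qed.

Lemma is_derive_E_plus_I t : 0 <= t ->
  is_derive (fun s => E s + (sigma + mu) / sigma * I s) t (a * I t * (S t - Sst)).
Proof.
  intros Ht. destruct (Hsol t Ht) as [_ [DE DI]]. auto_derive.
  - repeat split; eexists; eassumption.
  - replace_Derive DE. replace_Derive DI. unfold fE, fI.
    replace (a * I t * (S t - Sst)) with (a * I t * S t - a * Sst * I t) by ring.
    rewrite infection_rate_mul_Se. field. lra.
Qed.

Definition lyapunov (t : R) : R :=
  volterra Sst (S t) + volterra Est (E t) + (sigma + mu) / sigma * volterra Ist (I t).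

Definition lyapunov_deriv (t : R) : R :=
  (1 - Sst / S t) * FSt t + (1 - Est / E t) * FEt t
  + (sigma + mu) / sigma * ((1 - Ist / I t) * FIt t).

Section Persistent.

Variables d T : R.
Hypotheses (hd : 0 < d) (hT : 0 <= T)
  (Hpers : forall t, T <= t -> d <= S t /\ d <= E t /\ d <= I t).

(* [S' <= mu N - (a d + kS) S], and [mu N / (a d + kS) < mu N / kS <= Se] when [Ie <= 0]. *)
Lemma S_eventually_below_Se : Ist <= 0 ->
  exists eta T1, 0 < eta /\ T <= T1 /\ forall t, T1 <= t -> S t <= Sst - eta.
Proof.
  intros HIe. pose proof infection_rate_pos as ha. pose proof removal_rate_pos as hk.
  set (A := a * d + kS). assert (hA : 0 < A) by (unfold A; nra).
  set (S1 := mu * N / A).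
  assert (HS1 : A * S1 = mu * N) by (unfold S1; field; lra).
  assert (HkS : mu * N <= kS * Sst).
  { pose proof endemic_balance. pose proof Se_pos.
    assert (0 <= a * Sst * - Ist) by (apply Rmult_le_pos; [nra | lra]). lra. }
  set (gap := Sst - S1).
  assert (Hgap : 0 < gap).
  { assert (Hprod : A * gap = a * d * Sst + (kS * Sst - A * S1)) by (unfold gap, A; ring).
    rewrite HS1 in Hprod.
    assert (0 < a * d * Sst) by (pose proof Se_pos; apply Rmult_lt_0_compat; [nra | lra]).
    apply (Rmult_lt_reg_l A); lra. }
  destruct (eventually_le_of_deriv_le_affine S (fun t => FSt t) T (mu * N) A)
    with (eta := gap / 2) as [T1 HT1]; [exact hA | | | lra |].
  - intros t Ht. apply Hsol. lra.
  - intros t Ht. rewrite fS_eq. destruct (Hpers t Ht) as [HS [_ HI]].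
    assert (0 <= a * S t * (I t - d)) by (apply Rmult_le_pos; [apply Rmult_le_pos |]; lra).
    unfold A. lra.
  - exists (gap / 2), (Rmax T T1). split; [lra | split; [apply Rmax_l |]].
    intros t Ht. pose proof (Rmax_r T T1). specialize (HT1 t ltac:(lra)).
    unfold gap, S1 in *. lra.
Qed.

Lemma persistence_Ie_pos : 0 < Ist.
Proof.
  apply Rnot_le_lt. intros HIe. pose proof infection_rate_pos as ha.
  destruct (S_eventually_below_Se HIe) as [eta [T1 [Heta [HT1 HS]]]].
  destruct (deriv_le_neg_unbounded_below (fun s => E s + (sigma + mu) / sigma * I s)
              (fun s => a * I s * (S s - Sst)) T1 (a * d * eta) 0) as [t [Ht HWt]].
  - apply Rmult_lt_0_compat; [apply Rmult_lt_0_compat |]; lra.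
  - intros t Ht. apply is_derive_E_plus_I. lra.
  - intros t Ht. destruct (Hpers t ltac:(lra)) as [_ [_ HI]]. specialize (HS t Ht).
    assert (a * I t * (S t - Sst) <= a * I t * - eta) by (apply Rmult_le_compat_l; nra).
    assert (a * d * eta <= a * I t * eta) by (apply Rmult_le_compat_r; nra).
    lra.
  - destruct (Hpers t ltac:(lra)) as [_ [HE HI]].
    assert (0 <= (sigma + mu) / sigma * I t)
      by (apply Rmult_le_pos; [apply Rlt_le, Rdiv_lt_0_compat |]; lra).
    lra.
Qed.

Hypothesis Hle : forall t, T <= t -> S t + E t + I t <= N.

Lemma SEI_abs_le t : T <= t -> Rabs (S t) <= N /\ Rabs (E t) <= N /\ Rabs (I t) <= N.
Proof.
  intros Ht. destruct (Hpers t Ht) as [HS [HE HI]]. specialize (Hle t Ht).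
  rewrite !Rabs_pos_eq by lra. lra.
Qed.

Lemma is_derive_SEI t : T <= t ->
  is_derive S t (FSt t) /\ is_derive E t (FEt t) /\ is_derive I t (FIt t).
Proof. intros Ht. apply Hsol. lra. Qed.

Section Endemic.

Hypothesis HIe : 0 < Ist.

Lemma Ee_pos : 0 < Est.
Proof. unfold Ee. apply Rmult_lt_0_compat; [apply Rdiv_lt_0_compat |]; lra. Qed.

Lemma lyapunov_nonneg t : T <= t -> 0 <= lyapunov t.
Proof.
  intros Ht. destruct (Hpers t Ht) as [HS [HE HI]]. unfold lyapunov.
  pose proof (volterra_nonneg Sst (S t) Se_pos ltac:(lra)).
  pose proof (volterra_nonneg Est (E t) Ee_pos ltac:(lra)).
  assert (0 <= (sigma + mu) / sigma * volterra Ist (I t))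
    by (apply Rmult_le_pos; [apply Rlt_le, Rdiv_lt_0_compat | apply volterra_nonneg]; lra).
  lra.
Qed.

Lemma is_derive_lyapunov t : T <= t -> is_derive lyapunov t (lyapunov_deriv t).
Proof.
  intros Ht. destruct (is_derive_SEI t Ht) as [DS [DE DI]].
  destruct (Hpers t Ht) as [HS [HE HI]]. pose proof Se_pos. pose proof Ee_pos.
  unfold lyapunov, lyapunov_deriv, volterra. auto_derive.
  - repeat split; try (eexists; eassumption);
      apply Rmult_lt_0_compat; try apply Rinv_0_lt_compat; lra.
  - replace_Derive DS. replace_Derive DE. replace_Derive DI. field. repeat split; lra.
Qed.

Lemma lyapunov_deriv_le t : T <= t ->
  lyapunov_deriv t <= - (kS / N * ((S t - Sst) * (S t - Sst))).
Proof.
  intros Ht. destruct (Hpers t Ht) as [HS [HE HI]]. specialize (Hle t Ht).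
  pose proof infection_rate_pos. pose proof removal_rate_pos. pose proof Se_pos. pose proof Ee_pos.
  unfold lyapunov_deriv. rewrite fS_eq. unfold fE, fI.
  apply (lyapunov_ineq a kS (sigma + mu) (gamma + mu)); try lra.
  - apply endemic_balance.
  - rewrite infection_rate_mul_Se. unfold Ee. field. repeat split; lra.
  - unfold Ee. field. lra.
Qed.

(* [V] converges, and [V' <= - q] with [q = kS / N (S - Se)^2], whose derivative is bounded. *)
Lemma S_is_lim_Se : is_lim S p_infty Sst.
Proof.
  pose proof removal_rate_pos as hk.
  assert (hq : 0 < kS / N) by (apply Rdiv_lt_0_compat; lra).
  destruct (nonincreasing_bounded_is_lim lyapunov T 0) as [l Hl]; [| exact lyapunov_nonneg |].
  { intros t u Htu. apply (nonincreasing_of_deriv_nonpos lyapunov lyapunov_deriv T); [| | lra].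
    - exact is_derive_lyapunov.
    - intros s Hs. pose proof (lyapunov_deriv_le s Hs). pose proof (Rle_0_sqr (S s - Sst)).
      unfold Rsqr in *. nra. }
  set (dq := fun t => kS / N * (2 * (S t - Sst) * FSt t)).
  assert (Hdq : forall t, T <= t ->
            is_derive (fun s => kS / N * ((S s - Sst) * (S s - Sst))) t (dq t)).
  { intros t Ht. destruct (is_derive_SEI t Ht) as [DS _]. unfold dq. auto_derive.
    - repeat split; eexists; eassumption.
    - replace_Derive DS. ring. }
  assert (HdqB : exists B, forall t, T <= t -> Rabs (dq t) <= B).
  { eexists. intros t Ht. destruct (SEI_abs_le t Ht) as [B1 [B2 B3]]. unfold dq, fS. bound_abs. }
  destruct HdqB as [B HdqB].
  apply is_lim_p_infty_intro. intros eps Heps.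
  destruct (eventually_lt_of_deriv_le_opp lyapunov lyapunov_deriv _ dq T B l
              is_derive_lyapunov Hdq HdqB lyapunov_deriv_le Hl (kS / N * (eps * eps)))
    as [T1 HT1]; [apply Rmult_lt_0_compat; nra |].
  exists T1. intros t Ht. specialize (HT1 t Ht).
  assert ((S t - Sst) * (S t - Sst) < eps * eps) by (apply (Rmult_lt_reg_l (kS / N)); lra).
  apply Rabs_def1; nra.
Qed.

(* Barbalat gives [S' -> 0], and [I = (mu N - kS S - S') / (a S)]. *)
Lemma I_is_lim_Ie : is_lim I p_infty Ist.
Proof.
  pose proof infection_rate_pos as ha. pose proof removal_rate_pos as hk.
  pose proof Se_pos as hSe. pose proof S_is_lim_Se as HS.
  set (dFS := fun t => - a * (FSt t * I t + S t * FIt t) - kS * FSt t).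
  assert (HdFS : forall t, T <= t -> is_derive (fun s => FSt s) t (dFS t)).
  { intros t Ht. destruct (is_derive_SEI t Ht) as [DS [_ DI]].
    apply (is_derive_ext (fun s => mu * N - a * S s * I s - kS * S s));
      [intros s; symmetry; apply fS_eq |].
    auto_derive; [repeat split; eexists; eassumption |].
    replace_Derive DS. replace_Derive DI. unfold dFS. ring. }
  assert (HdFSB : exists B, forall t, T <= t -> Rabs (dFS t) <= B).
  { eexists. intros t Ht. destruct (SEI_abs_le t Ht) as [B1 [B2 B3]].
    unfold dFS, fS, fI. bound_abs. }
  destruct HdFSB as [B HdFSB].
  pose proof (Barbalat S (fun t => FSt t) dFS T B Sst (fun t Ht => proj1 (is_derive_SEI t Ht))
                HdFS HdFSB HS) as HFS.
  apply (is_lim_p_infty_ext (fun t => (mu * N - kS * S t - FSt t) / (a * S t)) I T).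
  { intros t Ht. destruct (Hpers t Ht) as [HSt _]. rewrite fS_eq. field. repeat split; lra. }
  replace Ist with ((mu * N - kS * Sst - 0) / (a * Sst))
    by (rewrite endemic_balance; field; split; lra).
  apply (is_lim_div _ _ p_infty (mu * N - kS * Sst - 0) (a * Sst)); [| | | constructor].
  - apply is_lim_minus'; [apply is_lim_minus'; [apply is_lim_const |] | exact HFS].
    exact (is_lim_scal_l S kS p_infty Sst HS).
  - exact (is_lim_scal_l S a p_infty Sst HS).
  - intros Heq. injection Heq. nra.
Qed.

(* Barbalat gives [I' -> 0], and [E = (I' + (gamma + mu) I) / sigma]. *)
Lemma E_is_lim_Ee : is_lim E p_infty Est.
Proof.
  pose proof I_is_lim_Ie as HI.
  set (dFI := fun t => sigma * FEt t - (gamma + mu) * FIt t).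
  assert (HdFI : forall t, T <= t -> is_derive (fun s => FIt s) t (dFI t)).
  { intros t Ht. destruct (is_derive_SEI t Ht) as [_ [DE DI]]. unfold fI. auto_derive.
    - repeat split; eexists; eassumption.
    - replace_Derive DE. replace_Derive DI. unfold dFI, fI. ring. }
  assert (HdFIB : exists B, forall t, T <= t -> Rabs (dFI t) <= B).
  { eexists. intros t Ht. destruct (SEI_abs_le t Ht) as [B1 [B2 B3]].
    unfold dFI, fE, fI. bound_abs. }
  destruct HdFIB as [B HdFIB].
  pose proof (Barbalat I (fun t => FIt t) dFI T B Ist
                (fun t Ht => proj2 (proj2 (is_derive_SEI t Ht))) HdFI HdFIB HI) as HFI.
  apply (is_lim_p_infty_ext (fun t => / sigma * (FIt t + (gamma + mu) * I t)) E T).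
  { intros t Ht. unfold fI. field. lra. }
  replace Est with (/ sigma * (0 + (gamma + mu) * Ist)) by (unfold Ee; field; lra).
  apply (is_lim_scal_l _ (/ sigma) p_infty (0 + (gamma + mu) * Ist)).
  apply is_lim_plus'; [exact HFI |]. exact (is_lim_scal_l I (gamma + mu) p_infty Ist HI).
Qed.

End Endemic.

End Persistent.

End SEIR.

Theorem mainTheorem11 (N mu beta sigma gamma p rho : R)
  (hN : 0 < N) (hmu : 0 < mu) (hbeta : 0 < beta) (hsigma : 0 < sigma)
  (hgamma : 0 < gamma) (hp : 0 < p) (hrho0 : 0 < rho) (hrho1 : rho < 1)
  (x : R -> R * R * R)
  (hx0 : inOmega N (x 0))
  (hsol : forall t, 0 <= t -> solves_at N mu beta sigma gamma rho p x t)
  (hint : forall y, omega_limit x y -> inIntOmega N y) :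
  closed_orbit N mu beta sigma gamma rho p (omega_limit x) \/
  (forall y, omega_limit x y <->
     y = (Se N mu beta sigma gamma rho, Ee N mu beta sigma gamma rho p,
          Ie N mu beta sigma gamma rho p)).
Proof.
  right.
  set (S := fun t => fst (fst (x t))). set (E := fun t => snd (fst (x t))).
  set (I := fun t => snd (x t)).
  assert (H0 : 0 <= S 0 /\ 0 <= E 0 /\ 0 <= I 0 /\ S 0 + E 0 + I 0 <= N)
    by (unfold S, E, I; destruct (x 0) as [[s0 e0] i0]; exact hx0).
  destruct H0 as [HS0 [HE0 [HI0 HN0]]].
  pose proof (SEI_nonneg N mu beta sigma gamma p rho hN hmu hbeta hsigma hgamma hp hrho1
                S E I hsol HS0 HE0 HI0) as Hnn.
  pose proof (SEI_total_le N mu beta sigma gamma p rho hN hgamma hp S E I hsol HN0 Hnn) as Hle.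
  destruct (omega_limit_persistence x N) as [d [T [hd [hT Hpers]]]].
  { intros t Ht. destruct (Hnn t Ht) as [HS [HE HI]]. specialize (Hle t Ht).
    fold (S t) (E t) (I t). lra. }
  { intros [[y1 y2] y3] Hy. destruct (hint _ Hy) as [H1 [H2 [H3 _]]]. simpl. tauto. }
  assert (HleT : forall t, T <= t -> S t + E t + I t <= N) by (intros t Ht; apply Hle; lra).
  pose proof (persistence_Ie_pos N mu beta sigma gamma p rho hN hmu hbeta hsigma hgamma hp hrho1
                S E I hsol d T hd hT Hpers) as HIe.
  apply omega_limit_of_is_lim; simpl.
  - exact (S_is_lim_Se N mu beta sigma gamma p rho hN hmu hbeta hsigma hgamma hp hrho1
             S E I hsol d T hd hT Hpers HleT HIe).
  - exact (E_is_lim_Ee N mu beta sigma gamma p rho hN hmu hbeta hsigma hgamma hp hrho1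
             S E I hsol d T hd hT Hpers HleT HIe).
  - exact (I_is_lim_Ie N mu beta sigma gamma p rho hN hmu hbeta hsigma hgamma hp hrho1
             S E I hsol d T hd hT Hpers HleT HIe).
Qed.
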